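(* In the Simon urn described in the context, with fixed trigger probability $p\in(0,1)$, for all integers $n\ge c\ge1$, $$\mathbb E[K_{n,c}]=\frac{\Gamma(n-p+1)}{\Gamma(n)}\left(\frac{p^{c-1}}{(1-p)^c}\sum_{i=c+1}^{n}\binom{i-2}{c-2}\frac{(1-p)^i\,\Gamma(i)}{\Gamma(i-p+1)}+\frac{p^{c-1}\,\Gamma(c)}{\Gamma(c-p+1)}\right),$$ where $\Gamma$ is the gamma function, an empty sum is $0$, and $\binom{i-2}{-1}=0$.
   Context: Simon urn. The urn is empty at time $0$. Let $B_0=1$ and let $(B_n)_{n\ge1}$ be i.i.d. Bernoulli random variables with $\Pr(B_n=1)=p\in(0,1)$, independent of everything else. Colors are labelled $1,2,\dots$ in order of first appearance. At each time $n\ge1$: if $B_{n-1}=1$, one ball of a new color (not yet present) is added to the urn and this color is registered; if $B_{n-1}=0$, a ball is drawn uniformly at random from the urn, its color is registered, and one additional ball of that color is added. Thus the urn contains $n$ balls at time $n$. $K_{n,c}$ denotes the number of times color $c$ has been registered up to and including time $n$ (equal to the number of balls of color $c$ at time $n$), and $K_{n,c}=0$ if color $c$ has not yet appeared. *)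

From HB Require Import structures.
From mathcomp Require Import all_boot all_order all_algebra.
From mathcomp Require Import all_classical all_reals all_analysis.
Set Implicit Arguments. Unset Strict Implicit. Unset Printing Implicit Defensive.
Import Order.TTheory GRing.Theory Num.Theory.
Local Open Scope classical_set_scope.
Local Open Scope ring_scope.

(* Euler's Gamma function, Gamma x = int_0^oo t^(x-1) e^(-t) dt (used only for x > 0). *)
Definition Gamma {R : realType} (x : R) : R :=
  Rintegral (@lebesgue_measure R) `]0%R, +oo[
            (fun t : R => t `^ (x - 1) * expR (- t)).

(* The state of the urn at time n is the sequence of the colors of its n balls,
   in order of addition (ball k+1 was added at time k+1).  Colors are 1,2,...
   in order of first appearance, so the next new color is (max color) + 1. *)
Definition new_color (s : seq nat) : nat := (foldr maxn 0%N s).+1.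

(* Transition from time n-1 (state s, with n-1 balls) to time n, as a finite
   list of (probability, next state).  At time 1, B_0 = 1 so a new color is
   added.  At time n >= 2, with probability p (B_{n-1} = 1) a new color is
   added; with probability 1-p a ball is drawn uniformly among the n-1 balls
   (each with probability (1-p)/(n-1)) and a ball of its color is added. *)
Definition simon_step {R : realType} (p : R) (n : nat) (s : seq nat)
  : seq (R * seq nat) :=
  if n == 1%N then [:: (1, rcons s (new_color s))]
  else (p, rcons s (new_color s)) ::
       [seq ((1 - p) / (n.-1)%:R, rcons s (nth 0%N s k)) | k <- iota 0 n.-1].

(* Law of the urn state at time n, as a finite list of weighted outcomes. *)
Fixpoint simon_law {R : realType} (p : R) (n : nat) : seq (R * seq nat) :=
  match n with
  | 0 => [:: (1, [::])]
  | m.+1 => flatten [seq [seq (ws.1 * wt.1, wt.2) | wt <- simon_step p m.+1 ws.2]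
                    | ws <- simon_law p m]
  end.

Definition K (n c : nat) (s : seq nat) : nat := count_mem c s.

Definition EK {R : realType} (p : R) (n c : nat) : R :=
  \sum_(ws <- simon_law p n) ws.1 * (K n c ws.2)%:R.

(* Write M_n for the number of colours present at time n.  At a time n + 1 >= 2 a
   ball of colour c is added with probability (1 - p) K_{n,c} / n (a draw) plus
   p [M_n = c - 1] (colour c is born), so
     E K_{n+1,c} = (1 + (1 - p) / n) E K_{n,c} + p P(M_n = c - 1),   E K_{c,c} = p^(c-1),
   and M_{n+1} - 1 is binomial (n, p).  With w_n = Gamma(n - p + 1) / Gamma(n) the
   growth factor is w_{n+1} / w_n, so dividing by w_n telescopes the recurrence.
   The only facts about Gamma needed are Gamma(x + 1) = x Gamma(x) (integration by
   parts) and 0 < Gamma(x) < oo for x >= 1. *)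

From HB Require Import structures.
From mathcomp Require Import all_boot all_order all_algebra.
From mathcomp Require Import all_classical all_reals all_analysis.
From mathcomp Require Import ring lra measurable_realfun.
Import Order.TTheory GRing.Theory Num.Theory numFieldNormedType.Exports.
Local Open Scope classical_set_scope.
Local Open Scope ring_scope.

Lemma natr_count_mem_nth (R : pzSemiRingType) (c : nat) (s : seq nat) :
  (count_mem c s)%:R = \sum_(k <- iota 0 (size s)) (nth 0%N s k == c)%:R :> R.
Proof.
rewrite -[in LHS](mkseq_nth 0%N s) count_map -sum1_count natr_sum big_mkcond.
by apply: eq_bigr => k _ /=; case: eqP.
Qed.

Lemma affine_recurrenceE (F : fieldType) (x b w : nat -> F) (c n : nat) :
  (forall k, (c <= k)%N -> w k != 0) ->
  (forall k, (c <= k)%N -> x k.+1 = w k.+1 / w k * x k + b k) ->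
  (c <= n)%N -> x n = w n * (x c / w c + \sum_(c <= k < n) b k / w k.+1).
Proof.
move=> w_neq0 xS /subnKC <-; elim: (n - c)%N => [|d IHd].
  by rewrite addn0 big_geq // addr0 mulrC divfK ?w_neq0.
have c_le_cd : (c <= c + d)%N by exact: leq_addr.
rewrite addnS xS // IHd big_nat_recr //=.
by field; rewrite !w_neq0 // leqW.
Qed.

Lemma powR_le1D (R : realType) (a t : R) : 0 <= a <= 1 -> 0 <= t -> t `^ a <= 1 + t.
Proof.
move=> /andP[a_ge0 a_le1] t_ge0; have [t_le1|t_gt1] := leP t 1.
  have [->|t_neq0] := eqVneq t 0; first by rewrite /powR eqxx addr0; case: (a == 0).
  have t01 : 0 < t <= 1 by rewrite lt_def t_neq0 t_ge0.
  by apply: le_trans (ger_powR t01 a_ge0) _; rewrite powRr0 lerDl.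
by apply: le_trans (ler1_powR (ltW t_gt1) a_le1) _; rewrite lerDr.
Qed.

Lemma le_powR_powRD1 (R : realType) (a t : R) : 0 <= a <= 1 -> 0 <= t ->
  t <= t `^ a + t `^ (a + 1).
Proof.
move=> /andP[a_ge0 a_le1] t_ge0; have [t_le1|t_gt1] := leP t 1.
  have [->|t_neq0] := eqVneq t 0; first by rewrite addr_ge0 ?powR_ge0.
  have t01 : 0 < t <= 1 by rewrite lt_def t_neq0 t_ge0.
  by apply: le_trans (ger1_powR t01 a_le1) _; rewrite lerDl powR_ge0.
have a1_ge1 : 1 <= a + 1 by rewrite lerDr.
by apply: le_trans (le1r_powR (ltW t_gt1) a1_ge1) _; rewrite lerDr powR_ge0.
Qed.

(* Colours are numbered in order of appearance, so for an urn state this is the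
   number of colours present. *)
Definition max_color (s : seq nat) : nat := foldr maxn 0%N s.

Lemma max_color_rcons s x : max_color (rcons s x) = maxn (max_color s) x.
Proof. by elim: s => [|y s IHs] /=; rewrite ?maxn0 ?max0n // IHs maxnA. Qed.

Lemma leq_max_color s x : x \in s -> (x <= max_color s)%N.
Proof.
elim: s => //= y s IHs; rewrite in_cons => /predU1P[->|/IHs]; first exact: leq_maxl.
by move/leq_trans; apply; exact: leq_maxr.
Qed.

Lemma nth_leq_max_color s k : (nth 0%N s k <= max_color s)%N.
Proof.
have [k_lt|k_ge] := ltnP k (size s); first exact/leq_max_color/mem_nth.
by rewrite nth_default.
Qed.

Lemma new_colorE s : new_color s = (max_color s).+1.
Proof. by []. Qed.

Lemma max_color_rcons_new s : max_color (rcons s (new_color s)) = new_color s.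
Proof. by rewrite max_color_rcons; apply/maxn_idPr/leqnSn. Qed.

Lemma max_color_rcons_nth s k : max_color (rcons s (nth 0%N s k)) = max_color s.
Proof. by rewrite max_color_rcons; apply/maxn_idPl/nth_leq_max_color. Qed.

Section SimonUrn.
Context {R : realType} (p : R).

Lemma mem_simon_law n ws :
  ws \in simon_law p n -> size ws.2 = n /\ (max_color ws.2 <= n)%N.
Proof.
elim: n ws => [|n IHn] ws /=; first by rewrite inE => /eqP ->.
case/flattenP=> _ /mapP[vs /IHn[size_vs max_vs] ->] /mapP[wt step_wt ->] /=.
have new_ok : (max_color (rcons vs.2 (new_color vs.2)) <= n.+1)%N.
  by rewrite max_color_rcons_new.
move: step_wt; rewrite /simon_step; case: ifP => _.
  by rewrite inE => /eqP -> /=; rewrite size_rcons size_vs.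
rewrite inE => /predU1P[-> | /mapP[k _ ->]] /=; rewrite size_rcons size_vs //.
by rewrite max_color_rcons_nth (leq_trans max_vs).
Qed.

Lemma simon_lawS n :
  simon_law p n.+1 =
  flatten [seq [seq (ws.1 * wt.1, wt.2) | wt <- simon_step p n.+1 ws.2]
          | ws <- simon_law p n].
Proof. by []. Qed.

Lemma simon_stepS n s : (0 < n)%N ->
  simon_step p n.+1 s =
  (p, rcons s (new_color s)) ::
  [seq ((1 - p) / n%:R, rcons s (nth 0%N s k)) | k <- iota 0 n].
Proof. by case: n. Qed.

Lemma sum_simon_lawS n (f : seq nat -> R) : (0 < n)%N ->
  \sum_(ws <- simon_law p n.+1) ws.1 * f ws.2 =
  \sum_(ws <- simon_law p n) ws.1 *
    (p * f (rcons ws.2 (new_color ws.2)) +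
     (1 - p) / n%:R * \sum_(k <- iota 0 n) f (rcons ws.2 (nth 0%N ws.2 k))).
Proof.
move=> n_gt0; rewrite simon_lawS big_flatten big_map; apply: eq_bigr => ws _.
rewrite big_map simon_stepS // big_cons big_map mulrDr mulrA; congr (_ + _).
by rewrite !big_distrr; apply: eq_bigr => k _ /=; rewrite !mulrA.
Qed.

Definition max_color_law n j : R :=
  \sum_(ws <- simon_law p n) ws.1 * (max_color ws.2 == j)%:R.

Lemma max_color_lawS n j : (0 < n)%N ->
  max_color_law n.+1 j =
  p * \sum_(ws <- simon_law p n) ws.1 * ((max_color ws.2).+1 == j)%:R +
  (1 - p) * max_color_law n j.
Proof.
move=> n_gt0; rewrite /max_color_law (sum_simon_lawS _ (fun s => (max_color s == j)%:R)) //.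
rewrite !big_distrr -big_split /=.
apply: eq_big_seq => ws /mem_simon_law[size_ws _].
under eq_bigr do rewrite max_color_rcons_nth.
rewrite max_color_rcons_new big_const_seq count_predT size_iota iter_addr_0 -mulr_natl.
field; by rewrite pnatr_eq0 -lt0n.
Qed.

Lemma max_color_lawSS n j : (0 < n)%N ->
  max_color_law n.+1 j.+1 = p * max_color_law n j + (1 - p) * max_color_law n j.+1.
Proof.
by move=> n_gt0; rewrite max_color_lawS //; under eq_bigr do rewrite eqSS.
Qed.

Lemma max_color_law0 n : (0 < n)%N -> max_color_law n 0 = 0.
Proof.
case: n => // n _; elim: n => [|n IHn]; first by rewrite /max_color_law /= big_seq1 mulr0.
by rewrite max_color_lawS // IHn big1 ?mulr0 ?addr0 // => ws _; rewrite mulr0.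
Qed.

Lemma max_color_law_binomial m j :
  max_color_law m.+1 j.+1 = 'C(m, j)%:R * p ^+ j * (1 - p) ^+ (m - j).
Proof.
elim: m j => [|m IHm] j.
  by rewrite /max_color_law /= big_seq1 /=; case: j => [|j]; rewrite ?bin0n /=; ring.
rewrite max_color_lawSS // IHm; case: j => [|j].
  by rewrite max_color_law0 // !bin0 !subn0 exprS; ring.
rewrite IHm binS natrD subSS.
have [j_lt_m|m_le_j] := ltnP j m; first by rewrite -(subnSK j_lt_m) !exprS; ring.
by rewrite (@bin_small m j.+1) ?ltnS // subnS (eqP m_le_j) !exprS; ring.
Qed.

Lemma EK_S n c : (0 < n)%N ->
  EK p n.+1 c.+1 = (1 + (1 - p) / n%:R) * EK p n c.+1 + p * max_color_law n c.
Proof.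
move=> n_gt0; rewrite /EK /K (sum_simon_lawS _ (fun s => (count_mem c.+1 s)%:R)) //.
rewrite /max_color_law !big_distrr -big_split; apply: eq_big_seq => ws /mem_simon_law[size_ws _] /=.
under eq_bigr do rewrite -cats1 count_cat /= addn0 natrD.
rewrite big_split /= big_const_seq count_predT size_iota iter_addr_0.
rewrite -[X in iota _ X]size_ws -natr_count_mem_nth -cats1 count_cat /= addn0 natrD.
rewrite new_colorE eqSS -mulr_natr; field; by rewrite pnatr_eq0 -lt0n.
Qed.

Lemma EK_small n c : (n < c)%N -> EK p n c = 0.
Proof.
move=> n_lt_c; rewrite /EK big1_seq // => ws /andP[_ /mem_simon_law[_ max_ws]].
rewrite /K (count_memPn _) ?mulr0 //; apply: contraTN n_lt_c => /leq_max_color c_le.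
by rewrite -leqNgt (leq_trans c_le).
Qed.

Lemma EK_diag c : (0 < c)%N -> EK p c c = p ^+ c.-1.
Proof.
case: c => [//|[_|c _]]; first by rewrite /EK /K /= big_seq1 /=; ring.
by rewrite EK_S // EK_small // max_color_law_binomial binn subnn exprS; ring.
Qed.

(* The probability that colour c + 1 is born at time k + 1. *)
Lemma birth_probE c k : 1 - p != 0 -> (c < k)%N ->
  p * max_color_law k c =
  p ^+ c / (1 - p) ^+ c.+1 *
  ((if c.+1 == 1%N then 0 else 'C(k.+1 - 2, c.+1 - 2)%:R) * (1 - p) ^+ k.+1).
Proof.
move=> p1_neq0; case: c => [|c] c_lt_k /=; first by rewrite max_color_law0 // mul0r !mulr0.
case: k c_lt_k => // k; rewrite ltnS => c_lt_k.
rewrite max_color_law_binomial !subSS !subn0 (_ : k.+2 = c.+2 + (k - c))%N.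
  by rewrite exprD exprS; field; rewrite expf_neq0.
by rewrite !addSn subnKC // ltnW.
Qed.
End SimonUrn.

Section GammaFunction.
Context {R : realType}.
Local Notation mu := (@lebesgue_measure R).

Definition gamma_integrand (x t : R) : R := t `^ (x - 1) * expR (- t).

Definition EGamma (x : R) : \bar R :=
  (\int[mu]_(t in `[0%R, +oo[) (gamma_integrand x t)%:E)%E.

Lemma gamma_integrand_ge0 x t : 0 <= gamma_integrand x t.
Proof. by rewrite mulr_ge0 ?powR_ge0 ?expR_ge0. Qed.

Lemma gamma_integrandD1 x : gamma_integrand (x + 1) = fun t => t `^ x * expR (- t).
Proof. by apply/funext => t; rewrite /gamma_integrand addrK. Qed.

Lemma measurable_gamma_integrand x : measurable_fun setT (gamma_integrand x).
Proof.
apply: measurable_funM; first exact: measurable_powR.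
exact: measurableT_comp.
Qed.

Lemma measurable_EFin_comp (f : R -> R) (D : set R) :
  measurable_fun setT f -> measurable_fun D (EFin \o f).
Proof. by move=> mf; apply/measurable_EFinP; exact: measurable_funTS. Qed.

Lemma GammaE x : Gamma x = fine (EGamma x).
Proof.
rewrite /Gamma /Rintegral /EGamma integral_itv_obnd_cbnd //.
exact: measurable_EFin_comp (measurable_gamma_integrand x).
Qed.

Lemma EGamma_ge0 x : (0 <= EGamma x)%E.
Proof. by apply: integral_ge0 => t _; rewrite lee_fin gamma_integrand_ge0. Qed.

Lemma continuous_powR (a t : R) : 0 < t -> {for t, continuous (fun u : R => u `^ a)}.
Proof.
move=> t_gt0; apply/differentiable_continuous/derivable1_diffP.
by apply: derivable_powR; rewrite in_itv /= andbT.
Qed.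

Lemma continuous_expRN t : {for t, continuous (fun u : R => expR (- u))}.
Proof. by apply: continuous_comp; [exact: (@continuousN _ R^o) | exact: continuous_expR]. Qed.

Lemma continuous_gamma_integrand x t : 0 < t -> {for t, continuous (gamma_integrand x)}.
Proof. by move=> t_gt0; apply: continuousM; [exact: continuous_powR | exact: continuous_expRN]. Qed.

Lemma gamma_integrand_cvg0 x : 1 <= x ->
  gamma_integrand x t @[t --> 0^'+] --> gamma_integrand x 0.
Proof.
move=> x_ge1; apply: cvgM; last exact/cvg_at_right_filter/continuous_expRN.
have := x_ge1; rewrite -subr_ge0 le_eqVlt => /predU1P[<-|x_gt1].
  by under eq_fun do rewrite powRr0; rewrite powRr0; exact: cvg_cst.
by rewrite powR0 ?gt_eqF //; exact: powR_cvg0.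
Qed.

Lemma gamma_integrand_cvgy x : gamma_integrand x t @[t --> +oo] --> 0.
Proof.
have [m x_le_m] : exists m : nat, x - 1 <= m%:R.
  exists (Num.bound `|x - 1|); apply: le_trans (ler_norm _) _.
  exact/ltW/archi_boundP.
set C : R := (m.+1`!)%:R; have C_gt0 : 0 < C by rewrite ltr0n fact_gt0.
have C_cvg : (fun t : R => C * t^-1) @ +oo --> 0.
  rewrite -(mulr0 C); apply: cvgM; first exact: cvg_cst.
  by apply/(@gtr0_cvgV0 _ _ _ _ id); [near=> t | exact: cvg_id].
apply: (squeeze_cvgr _ (cvg_cst 0) C_cvg); near=> t.
have t_ge1 : 1 <= t by near: t; exact: nbhs_pinfty_ge.
have t_gt0 : 0 < t by lra.
rewrite gamma_integrand_ge0 /= /gamma_integrand expRN.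
rewrite ler_pdivrMr ?expR_gt0 // mulrAC ler_pdivlMr //.
apply: (@le_trans _ _ (t ^+ m * t)).
  rewrite ler_wpM2r ?(ltW t_gt0) // -powR_mulrn ?(ltW t_gt0) //.
  exact: ler_powR.
rewrite -exprSr mulrC -(ler_pdivrMr _ _ C_gt0).
by apply: le_trans (expR_ge1Dxn m (ltW t_gt0)); rewrite /C; lra.
Unshelve. all: by end_near. Qed.

Lemma is_derive_gamma_integrandD1 (x t : R) : 0 < t ->
  is_derive t 1 (gamma_integrand (x + 1))
    (x * gamma_integrand x t - gamma_integrand (x + 1) t).
Proof.
move=> t_gt0; rewrite gamma_integrandD1 /gamma_integrand /=.
have dpow : is_derive t 1 (fun u : R => u `^ x) (x * t `^ (x - 1)).
  exact: is_derive1_powR.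
have dexp : is_derive t 1 (expR \o (fun u : R => - u)) (expR (- t) * -1).
  exact: is_derive1_comp.
have -> : x * (t `^ (x - 1) * expR (- t)) - t `^ x * expR (- t) =
    t `^ x *: (expR (- t) * -1) + expR (- t) *: (x * t `^ (x - 1)).
  by rewrite /GRing.scale /=; ring.
exact: is_deriveM.
Qed.

Lemma gamma_by_partsE x t : 0 < x -> 0 <= t ->
  x * gamma_integrand x t - gamma_integrand (x + 1) t = gamma_integrand x t * (x - t).
Proof.
by move=> x_gt0 t_ge0; rewrite gamma_integrandD1 /gamma_integrand -(mulr_powRB1 t_ge0 x_gt0); ring.
Qed.

Lemma gamma_by_parts_ge0 (x t : R) : 0 < x -> 0 <= t <= x ->
  0 <= x * gamma_integrand x t - gamma_integrand (x + 1) t.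
Proof.
move=> x_gt0 /andP[t_ge0 t_le_x].
by rewrite gamma_by_partsE // mulr_ge0 ?gamma_integrand_ge0 ?subr_ge0.
Qed.

Lemma gamma_by_parts_le0 (x t : R) : 0 < x -> x <= t ->
  x * gamma_integrand x t - gamma_integrand (x + 1) t <= 0.
Proof.
move=> x_gt0 x_le_t; have t_ge0 : 0 <= t by exact: le_trans (ltW x_gt0) x_le_t.
by rewrite gamma_by_partsE // mulr_ge0_le0 ?gamma_integrand_ge0 // subr_le0.
Qed.

Lemma continuous_gamma_by_parts (x t : R) : 0 < t ->
  {for t, continuous (fun u => x * gamma_integrand x u - gamma_integrand (x + 1) u)}.
Proof.
move=> t_gt0; apply: continuousB; last exact: continuous_gamma_integrand.
by apply: continuousM; [exact: cvg_cst | exact: continuous_gamma_integrand].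
Qed.

Lemma integral_gamma_by_parts_left (x : R) : 1 <= x ->
  (\int[mu]_(t in `[0%R, x]) (x * gamma_integrand x t - gamma_integrand (x + 1) t)%:E
   = (gamma_integrand (x + 1) x)%:E)%E.
Proof.
move=> x_ge1; have x_gt0 : 0 < x by lra.
have x1_ge1 : 1 <= x + 1 by lra.
have G0 : gamma_integrand (x + 1) 0 = 0.
  by rewrite gamma_integrandD1 powR0 ?mul0r // gt_eqF.
have dG := @is_derive_gamma_integrandD1 x.
rewrite (@continuous_FTC2 _ _ (gamma_integrand (x + 1))) // ?G0 ?sube0 //.
- apply/continuous_within_itvP => //; split.
  + by move=> t; rewrite in_itv /= => /andP[t_gt0 _]; exact: continuous_gamma_by_parts.
  + apply: cvgB; last exact: gamma_integrand_cvg0.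
    by apply: cvgM; [exact: cvg_cst | exact: gamma_integrand_cvg0].
  + exact/cvg_at_left_filter/continuous_gamma_by_parts.
- split; last exact/cvg_at_left_filter/continuous_gamma_integrand.
  + by move=> t; rewrite in_itv /= => /andP[/dG[]].
  + exact: gamma_integrand_cvg0.
- by move=> t; rewrite in_itv /= => /andP[/dG[_ <-] _]; rewrite derive1E.
Qed.

Lemma integral_gamma_by_parts_right (x : R) : 0 < x ->
  (\int[mu]_(t in `[x, +oo[) (gamma_integrand (x + 1) t - x * gamma_integrand x t)%:E
   = (gamma_integrand (x + 1) x)%:E)%E.
Proof.
move=> x_gt0; have dG := @is_derive_gamma_integrandD1 x.
have dNG (t : R) : 0 < t -> is_derive t 1 (fun u => - gamma_integrand (x + 1) u)
    (gamma_integrand (x + 1) t - x * gamma_integrand x t).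
  by move=> t_gt0; rewrite -opprB; exact: (is_deriveN (dG t t_gt0)).
have cont (t : R) : 0 < t -> {for t, continuous
    (fun u => gamma_integrand (x + 1) u - x * gamma_integrand x u)}.
  move=> t_gt0; apply: continuousB; first exact: continuous_gamma_integrand.
  by apply: continuousM; [exact: cvg_cst | exact: continuous_gamma_integrand].
rewrite (@ge0_continuous_FTC2y _ _ (fun u => - gamma_integrand (x + 1) u) _ 0).
- by rewrite sub0e EFinN oppeK.
- by move=> t x_le_t; rewrite -opprB oppr_ge0 gamma_by_parts_le0.
- apply/continuous_within_itvcyP; split; last exact/cvg_at_right_filter/cont.
  by move=> t; rewrite in_itv /= andbT => /(lt_trans x_gt0)/cont.
- by rewrite -oppr0; apply: cvgN; exact: gamma_integrand_cvgy.
- by move=> t /(lt_trans x_gt0)/dNG[].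
- by apply: cvgN; exact/cvg_at_right_filter/continuous_gamma_integrand.
- move=> t; rewrite in_itv /= andbT => /(lt_trans x_gt0)/dNG[_ <-].
  by rewrite derive1E.
Qed.

Lemma ge0_integral_subrK (D : set R) (f g : R -> R) : measurable D ->
  measurable_fun setT f -> measurable_fun setT g ->
  {in D, forall t, 0 <= f t - g t} -> {in D, forall t, 0 <= g t} ->
  (\int[mu]_(t in D) (f t)%:E =
   \int[mu]_(t in D) (f t - g t)%:E + \int[mu]_(t in D) (g t)%:E)%E.
Proof.
move=> mD mf mg fg_ge0 g_ge0; rewrite -ge0_integralD //.
- by apply: eq_integral => t _; rewrite -EFinD subrK.
- by move=> t /mem_set/fg_ge0; rewrite lee_fin.
- exact: measurable_EFin_comp (measurable_funB mf mg).
- by move=> t /mem_set/g_ge0; rewrite lee_fin.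
- exact: measurable_EFin_comp.
Qed.

Lemma ge0_integral_itv_split (f : R -> R) (a : R) : 0 <= a ->
  measurable_fun setT f -> (forall t, 0 <= t -> 0 <= f t) ->
  (\int[mu]_(t in `[0%R, +oo[) (f t)%:E =
   \int[mu]_(t in `[0%R, a]) (f t)%:E + \int[mu]_(t in `[a, +oo[) (f t)%:E)%E.
Proof.
move=> a_ge0 mf f_ge0.
rewrite (@itv_bndbnd_setU _ _ (BLeft 0%R) (BRight a) (BInfty _ false)) //.
rewrite ge0_integral_setU //= ?integral_itv_obnd_cbnd //; try exact: measurable_EFin_comp.
- move=> t; rewrite !in_itv /= => t_in; rewrite lee_fin f_ge0 //.
  by case: t_in => /andP[] // /ltW/(le_trans a_ge0).
- rewrite disj_set2E; apply/eqP/seteqP; split => // t /= [].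
  by rewrite !in_itv /= andbT => /andP[_ t_le_a] /(le_lt_trans t_le_a); rewrite ltxx.
Qed.

(* The derivative x gamma_x - gamma_(x+1) of gamma_(x+1) changes sign at t = x;
   splitting there keeps every integral an integral of a nonnegative function. *)
Lemma EGammaD1 (x : R) : 1 <= x -> EGamma (x + 1) = (x%:E * EGamma x)%E.
Proof.
move=> x_ge1; have x_gt0 : 0 < x by lra.
pose G := gamma_integrand (x + 1); pose g t := x * gamma_integrand x t.
have mG : measurable_fun setT G := measurable_gamma_integrand _.
have mg : measurable_fun setT g.
  by apply: measurable_funM => //; exact: measurable_gamma_integrand.
have G_ge0 t : 0 <= G t := gamma_integrand_ge0 _ _.
have g_ge0 t : 0 <= g t by rewrite mulr_ge0 ?(ltW x_gt0) ?gamma_integrand_ge0.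
have int_right : (\int[mu]_(t in `[x, +oo[) (G t)%:E =
    (G x)%:E + \int[mu]_(t in `[x, +oo[) (g t)%:E)%E.
  rewrite (@ge0_integral_subrK _ _ _ _ mG mg) ?integral_gamma_by_parts_right //.
  move=> t /set_mem; rewrite /= in_itv /= andbT => x_le_t.
  by rewrite -opprB oppr_ge0 gamma_by_parts_le0.
have int_left : (\int[mu]_(t in `[0%R, x]) (g t)%:E =
    (G x)%:E + \int[mu]_(t in `[0%R, x]) (G t)%:E)%E.
  rewrite (@ge0_integral_subrK _ _ _ _ mg mG) ?integral_gamma_by_parts_left //.
  by move=> t /set_mem; rewrite /= in_itv /=; exact: gamma_by_parts_ge0.
have -> : (x%:E * EGamma x = \int[mu]_(t in `[0%R, +oo[) (g t)%:E)%E.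
  rewrite /EGamma -ge0_integralZl_EFin //; last exact: ltW.
  - by move=> t _; rewrite lee_fin gamma_integrand_ge0.
  - exact: measurable_EFin_comp (measurable_gamma_integrand x).
rewrite /EGamma -/G !(@ge0_integral_itv_split _ _ (ltW x_gt0)) // int_right int_left.
by rewrite addeA [(_ + (G x)%:E)%E]addeC.
Qed.

Lemma EGamma1 : EGamma 1 = 1%:E.
Proof.
have dE (t : R) : is_derive t 1 (fun u : R => - expR (- u)) (expR (- t)).
  have dexp : is_derive t 1 (expR \o (fun u : R => - u)) (expR (- t) * -1).
    exact: is_derive1_comp.
  by have := is_deriveN dexp; rewrite mulrN1 opprK.
rewrite /EGamma; under eq_integral => t _ do rewrite /gamma_integrand subrr powRr0 mul1r.
rewrite (@ge0_continuous_FTC2y _ _ (fun u => - expR (- u)) 0 0).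
- by rewrite oppr0 expR0 EFinN sub0e oppeK.
- by move=> t _; exact: expR_ge0.
- by apply: continuous_subspaceT => t; exact: continuous_expRN.
- by rewrite -oppr0; apply: cvgN; exact: cvgr_expR.
- by move=> t _; have [] := dE t.
- by apply: cvgN; exact/cvg_at_right_filter/continuous_expRN.
- by move=> t _; rewrite derive1E; have [_ ->] := dE t.
Qed.

Lemma EGamma_leD (x y z : R) :
  (forall t, 0 <= t -> t `^ (x - 1) <= t `^ (y - 1) + t `^ (z - 1)) ->
  (EGamma x <= EGamma y + EGamma z)%E.
Proof.
move=> le_pow; have gi_ge0 w t : (0 <= (gamma_integrand w t)%:E)%E.
  by rewrite lee_fin gamma_integrand_ge0.
have mgi w (D : set R) : measurable_fun D (EFin \o gamma_integrand w).
  exact: measurable_EFin_comp (measurable_gamma_integrand w).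
rewrite /EGamma -ge0_integralD //; [|exact: mgi..].
apply: ge0_le_integral => //.
- exact: mgi.
- by apply: emeasurable_funD; exact: mgi.
move=> t; rewrite /= in_itv /= andbT => t_ge0.
by rewrite -EFinD lee_fin /gamma_integrand -mulrDl ler_wpM2r ?expR_ge0 ?le_pow.
Qed.

Lemma EGamma2 : EGamma 2 = 1%:E.
Proof. by rewrite -[2]/(1 + 1) EGammaD1 // EGamma1 mul1e. Qed.

(* Gamma x <= Gamma 1 + Gamma 2 = 2 and 1 = Gamma 2 <= Gamma x + Gamma (x + 1) = (1 + x) Gamma x. *)
Lemma EGamma_gt0_lty_itv12 (x : R) : 1 <= x <= 2 -> (0 < EGamma x < +oo)%E.
Proof.
move=> /andP[x_ge1 x_le2]; have x_gt0 : 0 < x by lra.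
have a01 : 0 <= x - 1 <= 1 by apply/andP; split; lra.
have lty : (EGamma x < +oo)%E.
  apply: le_lt_trans (@EGamma_leD x 1 2 _) _.
    by move=> t t_ge0; rewrite subrr powRr0 addrK powRr1 // powR_le1D.
  by rewrite EGamma1 EGamma2 -EFinD ltry.
have : (EGamma 2 <= EGamma x + EGamma (x + 1))%E.
  apply: EGamma_leD => t t_ge0; rewrite !addrK powRr1 //.
  by rewrite -{2}[x](subrK 1) le_powR_powRD1.
have fin_x : EGamma x \is a fin_num by rewrite ge0_fin_numE ?EGamma_ge0.
rewrite EGammaD1 // EGamma2 -(fineK fin_x) -EFinM -EFinD lee_fin lte_fin ltry andbT.
by have := fine_ge0 (EGamma_ge0 x); nra.
Qed.

Lemma EGamma_gt0_lty (x : R) : 1 <= x -> (0 < EGamma x < +oo)%E.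
Proof.
move=> x_ge1; have [m] : exists m : nat, x <= m.+2%:R.
  exists (Num.bound x); apply: le_trans (ltW (archi_boundP _)) _; first lra.
  by rewrite ler_nat -addn2 leq_addr.
elim: m x x_ge1 => [|m IHm] x x_ge1 x_le_m.
  by apply: EGamma_gt0_lty_itv12; rewrite x_ge1.
have [|x_gt] := leP x m.+2%:R; first exact: IHm.
have m2_ge2 : 2 <= m.+2%:R :> R by rewrite ler_nat.
move: x_le_m; rewrite -natr1 => x_le_m.
have x1_ge1 : 1 <= x - 1 by lra.
have /andP[E_gt0 E_lty] : (0 < EGamma (x - 1) < +oo)%E by apply: IHm => //; lra.
have fin_E : EGamma (x - 1) \is a fin_num by rewrite ge0_fin_numE ?EGamma_ge0.
rewrite -[x](subrK 1) EGammaD1 // -(fineK fin_E) -EFinM lte_fin ltry andbT.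
by rewrite mulr_gt0 ?fine_gt0 ?E_gt0 //; lra.
Qed.

Lemma Gamma_gt0 (x : R) : 1 <= x -> 0 < Gamma x.
Proof. by move=> x_ge1; rewrite GammaE fine_gt0 // EGamma_gt0_lty. Qed.

Lemma GammaD1 (x : R) : 1 <= x -> Gamma (x + 1) = x * Gamma x.
Proof.
move=> x_ge1; have /andP[_ lty] := EGamma_gt0_lty _ x_ge1.
by rewrite !GammaE EGammaD1 // fineM // ge0_fin_numE ?EGamma_ge0.
Qed.

End GammaFunction.

Definition urn_weight {R : realType} (p : R) (k : nat) : R :=
  Gamma (k%:R - p + 1) / Gamma k%:R.

Lemma urn_weight_gt0 {R : realType} (p : R) k : p < 1 -> (0 < k)%N -> 0 < urn_weight p k.
Proof.
move=> p_lt1 k_gt0; have k_ge1 : 1 <= k%:R :> R by rewrite ler1n.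
by rewrite /urn_weight divr_gt0 // !Gamma_gt0 //; lra.
Qed.

Lemma urn_weightS {R : realType} (p : R) k : p < 1 -> (0 < k)%N ->
  urn_weight p k.+1 / urn_weight p k = 1 + (1 - p) / k%:R.
Proof.
move=> p_lt1 k_gt0; have k_ge1 : 1 <= k%:R :> R by rewrite ler1n.
have Gk_gt0 := Gamma_gt0 _ k_ge1.
have Gkp_gt0 : 0 < Gamma (k%:R - p + 1) by apply: Gamma_gt0; lra.
rewrite /urn_weight -natr1 (_ : k%:R + 1 - p + 1 = (k%:R - p + 1) + 1); last by ring.
rewrite (GammaD1 (k%:R - p + 1)) ?(GammaD1 k%:R) //; last by lra.
by field; rewrite !gt_eqF //; lra.
Qed.

Theorem lemma4p2 (R : realType) (p : R) (hp0 : 0 < p) (hp1 : p < 1)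
  (n c : nat) (hc : (1 <= c)%N) (hcn : (c <= n)%N) :
  EK p n c =
  Gamma (n%:R - p + 1) / Gamma n%:R *
  (p ^+ c.-1 / (1 - p) ^+ c *
     \sum_(c.+1 <= i < n.+1)
        (if c == 1%N then 0 else ('C(i - 2, c - 2))%:R) *
        ((1 - p) ^+ i * Gamma i%:R / Gamma (i%:R - p + 1))
   + p ^+ c.-1 * Gamma c%:R / Gamma (c%:R - p + 1)).
Proof.
have p1_neq0 : 1 - p != 0 by rewrite subr_eq0 eq_sym lt_eqF.
have Gamma_neq0 (k : nat) : Gamma (k.+1%:R : R) != 0 /\ Gamma (k.+1%:R - p + 1) != 0.
  have k_ge1 : 1 <= k.+1%:R :> R by rewrite ler1n.
  by split; rewrite gt_eqF //; apply: Gamma_gt0; lra.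
case: c hc hcn => // c _ hcn.
rewrite (@affine_recurrenceE _ (fun k => EK p k c.+1) (fun k => p * max_color_law p k c)
  (urn_weight p) c.+1 n) //; first last.
- by move=> k c_lt_k; rewrite urn_weightS ?EK_S // (leq_trans _ c_lt_k).
- by move=> k c_lt_k; rewrite gt_eqF // urn_weight_gt0 // (leq_trans _ c_lt_k).
rewrite EK_diag // (big_add1 _ _ c.+1 n.+1) big_distrr /= addrC /urn_weight.
congr (_ * (_ + _)).
- apply: eq_big_nat => k /andP[c_lt_k _]; rewrite birth_probE //.
  have [G1 G2] := Gamma_neq0 k; set W := (if _ then _ else _).
  by field; rewrite G1 G2 expf_neq0.
- by have [G1 G2] := Gamma_neq0 c; field; rewrite G1 G2.
Qed.
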